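(* For every finite metric space $X$, $\zeta(X;1/8)\le \alpha_X$.
   Context: Let $(X,d)$ be a finite metric space; $B(x,r)$ denotes the ball of radius $r$ about $x$. Random zero sets: given $\Delta,\zeta>0$ and $p\in(0,1)$, $X$ admits a random zero set at scale $\Delta$ which is $\zeta$-spreading with probability $p$ if there is a probability distribution $\mu$ over subsets $Z\subseteq X$ such that for all $x,y\in X$ with $d(x,y)\ge\Delta$, $\mu\{Z: y\in Z \text{ and } d(x,Z)\ge \Delta/\zeta\}\ge p$. $\zeta(X;p)$ is the least $\zeta>0$ such that for every $\Delta>0$, $X$ admits a random zero set at scale $\Delta$ which is $\zeta$-spreading with probability $p$. Padded decompositions: for a partition $P$ of $X$ and $x\in X$, $P(x)$ denotes the element of $P$ containing $x$. An $\alpha$-padded decomposition bundle of $X$ is, for every $\Delta>0$, a random partition $P_\Delta$ of $X$ with distribution $\nu$ such that (1) for every $P$ in the support of $\nu$ and every $C\in P$, $\mathrm{diam}(C)<\Delta$; (2) for every $x\in X$, $\nu\{P: B(x,\Delta/\alpha)\subseteq P(x)\}\ge 1/2$. The modulus of padded decomposability $\alpha_X$ is the largest $\alpha>0$ such that $X$ admits an $\alpha$-padded decomposition bundle. *)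

From HB Require Import structures.
From mathcomp Require Import all_boot all_order all_algebra.
From mathcomp Require Import boolp classical_sets reals constructive_ereal ereal.
Set Implicit Arguments. Unset Strict Implicit. Unset Printing Implicit Defensive.
Import Order.TTheory GRing.Theory Num.Theory.
Local Open Scope ring_scope.
Local Open Scope classical_set_scope.

Section Defs.
Variables (R : realType) (T : finType).

Definition is_metric (d : T -> T -> R) : Prop :=
  [/\ (forall x y, 0 <= d x y),
      (forall x y, d x y = 0 <-> x = y),
      (forall x y, d x y = d y x) &
      (forall x y z, d x z <= d x y + d y z)].

Definition is_distr (A : finType) (mu : {ffun A -> R}) : Prop :=
  (forall a, 0 <= mu a) /\ \sum_(a : A) mu a = 1.

Definition cball (d : T -> T -> R) (x : T) (r : R) : {set T} :=
  [set y | d x y <= r].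

(* diameter of a subset (0 for the empty set) *)
Definition diam (d : T -> T -> R) (C : {set T}) : R :=
  \big[Num.max/0]_(x in C) \big[Num.max/0]_(y in C) d x y.

(* d(x, Z) >= r, unfolded: every point of Z is at distance >= r from x *)
Definition dist_ge (d : T -> T -> R) (x : T) (Z : {set T}) (r : R) : bool :=
  [forall z in Z, r <= d x z].

(* X admits a random zero set at scale D which is z-spreading with prob. p *)
Definition random_zero_set (d : T -> T -> R) (D z p : R) : Prop :=
  exists mu : {ffun {set T} -> R}, is_distr mu /\
    forall x y, D <= d x y ->
      p <= \sum_(Z : {set T} | (y \in Z) && dist_ge d x Z (D / z)) mu Z.

Definition zeta (d : T -> T -> R) (p : R) : \bar R :=
  ereal_inf [set z%:E | z in
    [set z : R | 0 < z /\ forall D, 0 < D -> random_zero_set d D z p]].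

Definition padded_bundle (d : T -> T -> R) (a : R) : Prop :=
  forall D, 0 < D ->
    exists nu : {ffun {set {set T}} -> R}, is_distr nu /\
      (forall P, 0 < nu P ->
         finset.partition P [set: T] /\ (forall C, C \in P -> diam d C < D)) /\
      (forall x, 1 / 2 <=
         \sum_(P : {set {set T}} | cball d x (D / a) \subset finset.pblock P x) nu P).

Definition alpha (d : T -> T -> R) : \bar R :=
  ereal_inf [set a%:E | a in [set a : R | 0 < a /\ padded_bundle d a]].

End Defs.

From HB Require Import structures.
From mathcomp Require Import all_boot all_order all_algebra.
From mathcomp Require Import boolp classical_sets reals constructive_ereal ereal.
From mathcomp Require Import fintype finset lra.
Set Implicit Arguments. Unset Strict Implicit. Unset Printing Implicit Defensive.
Import Order.TTheory GRing.Theory Num.Theory.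
Local Open Scope ring_scope.

(* Let P be a random partition from an a-padded decomposition at scale D, and
   let Z be the union of a uniformly random family of blocks of P, i.e. every
   block is kept independently with probability 1/2.  If d x y >= D, the blocks
   of x and y differ since blocks have diameter < D; with probability 1/4 the
   block of y is kept and that of x is not.  If moreover B(x, D/a) lies in the
   block of x, which happens with probability >= 1/2, then y is in Z and Z misses
   B(x, D/a).  So Z is a random zero set at scale D, a-spreading with
   probability 1/8, and every admissible a for alpha is admissible for zeta. *)

Lemma card_set_notin_in (U : finType) (a b : U) : a != b ->
  (4 * #|[set S : {set U} | (a \notin S) && (b \in S)]| = #|{set U}|)%N.
Proof.
move=> neq_ab; pose D := ~: [set a; b].
have bD : b \notin D by rewrite !inE eqxx orbT.
have -> : [set S : {set U} | (a \notin S) && (b \in S)] = [set b |: S | S in powerset D].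
  apply/setP => S; rewrite inE; apply/andP/imsetP => [[aS bS]|[S' + ->]].
    exists (S :\ b); last by rewrite setD1K.
    rewrite inE; apply/subsetP => z; rewrite !inE => /andP[zb zS].
    by rewrite negb_or zb andbT; apply: contraNneq aS => <-.
  rewrite inE => /subsetP S'D; rewrite !inE eqxx (negbTE neq_ab) /=; split=> //.
  by apply/negP => /S'D; rewrite !inE eqxx.
rewrite card_in_imset; last first.
  move=> S1 S2; rewrite !inE => /subsetP S1D /subsetP S2D /setP eqS.
  apply/setP => z; have := eqS z; rewrite !inE.
  by have [-> _|_ //] := eqVneq z b; apply/idP/idP => [/S1D|/S2D]; rewrite (negbTE bD).
rewrite -cardsT -powersetT !card_powerset cardsT -(cardsC [set a; b]) cards2 neq_ab.
by rewrite expnD mulnC.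
Qed.

Section FiniteDistributions.
Variable R : realType.

Definition uniform_distr (A : finType) : {ffun A -> R} := [ffun => #|A|%:R^-1].

Definition prod_distr (A B : finType) (mu : {ffun A -> R}) (nu : {ffun B -> R}) :
  {ffun A * B -> R} := [ffun ab => mu ab.1 * nu ab.2].

Definition push_distr (A B : finType) (mu : {ffun A -> R}) (f : A -> B) :
  {ffun B -> R} := [ffun b => \sum_(a | f a == b) mu a].

Lemma uniform_distr_sum (A : finType) (p : pred A) :
  \sum_(a | p a) uniform_distr A a = #|p|%:R / #|A|%:R.
Proof. by rewrite (eq_bigr _ (fun a _ => ffunE _ a)) sumr_const mulr_natl. Qed.

Lemma is_distr_uniform (A : finType) : (0 < #|A|)%N -> is_distr (uniform_distr A).
Proof.
move=> A_gt0; split=> [a|]; first by rewrite ffunE invr_ge0 ler0n.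
by rewrite (eq_bigl predT) // uniform_distr_sum divff // pnatr_eq0 -lt0n.
Qed.

Lemma prod_distr_sum (A B : finType) (mu : {ffun A -> R}) (nu : {ffun B -> R})
    (p : pred (A * B)) :
  \sum_(ab | p ab) prod_distr mu nu ab = \sum_a mu a * \sum_(b | p (a, b)) nu b.
Proof.
under [RHS]eq_bigr do rewrite mulr_sumr.
rewrite pair_big_dep; apply: eq_big => [[a b] //|ab _]; exact: ffunE.
Qed.

Lemma is_distr_prod (A B : finType) (mu : {ffun A -> R}) (nu : {ffun B -> R}) :
  is_distr mu -> is_distr nu -> is_distr (prod_distr mu nu).
Proof.
move=> [mu_ge0 mu1] [nu_ge0 nu1]; split=> [ab|]; first by rewrite ffunE mulr_ge0.
by rewrite prod_distr_sum -[RHS]mu1; apply: eq_bigr => a _; rewrite nu1 mulr1.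
Qed.

Lemma push_distr_sum (A B : finType) (mu : {ffun A -> R}) (f : A -> B) (p : pred B) :
  \sum_(b | p b) push_distr mu f b = \sum_(a | p (f a)) mu a.
Proof.
rewrite (partition_big f p) //; apply: eq_bigr => b pb; rewrite ffunE.
by apply: eq_bigl => a; rewrite andb_idl // => /eqP ->.
Qed.

Lemma is_distr_push (A B : finType) (mu : {ffun A -> R}) (f : A -> B) :
  is_distr mu -> is_distr (push_distr mu f).
Proof.
move=> [mu_ge0 mu1]; split=> [b|]; first by rewrite ffunE sumr_ge0.
by rewrite (eq_bigl predT) // push_distr_sum.
Qed.

End FiniteDistributions.

Section PaddedDecompositionToZeroSet.
Variables (R : realType) (T : finType) (d : T -> T -> R).

Definition union_of_blocks (P S : {set {set T}}) : {set T} :=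
  [set z | pblock P z \in S].

Lemma le_diam (C : {set T}) x y : x \in C -> y \in C -> d x y <= diam d C.
Proof.
move=> xC yC; apply: le_trans (le_bigmax_cond _ _ xC).
exact: (le_bigmax_cond _ _ yC).
Qed.

Lemma pblock_neq_of_diam_lt (P : {set {set T}}) D x y :
  partition P [set: T] -> (forall C, C \in P -> diam d C < D) -> D <= d x y ->
  pblock P x != pblock P y.
Proof.
move=> /and3P[/eqP covP _ _] diamP Dxy; apply/eqP => eq_xy.
have cov z : z \in cover P by rewrite covP inE.
have x_in : x \in pblock P x by rewrite mem_pblock.
have y_in : y \in pblock P x by rewrite eq_xy mem_pblock.
have := le_lt_trans (le_diam x_in y_in) (diamP _ (pblock_mem (cov x))).
by move/(le_lt_trans Dxy); rewrite ltxx.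
Qed.

Lemma union_of_blocks_spreading (P S : {set {set T}}) x y r :
  trivIset P -> cball d x r \subset pblock P x ->
  pblock P x \notin S -> pblock P y \in S ->
  (y \in union_of_blocks P S) && dist_ge d x (union_of_blocks P S) r.
Proof.
move=> tiP ball_x xS yS; rewrite inE yS /=; apply/forall_inP => z; rewrite inE => zS.
rewrite leNgt; apply: contraNN xS => lt_xz.
have zx : z \in pblock P x by apply: (subsetP ball_x); rewrite inE ltW.
by rewrite -(same_pblock tiP zx).
Qed.

Lemma separating_blocks_prob (P : {set {set T}}) x y r :
  trivIset P -> pblock P x != pblock P y -> cball d x r \subset pblock P x ->
  4^-1 <= \sum_(S | (y \in union_of_blocks P S) && dist_ge d x (union_of_blocks P S) r)
             uniform_distr R {set {set T}} S.
Proof.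
move=> tiP neq_xy ball_x; rewrite uniform_distr_sum -(card_set_notin_in neq_xy).
set m := #|[set S | _ & _]|.
have m_gt0 : (0 < m)%N.
  rewrite -(ltn_pmul2l (isT : 0 < 4)%N) muln0 card_set_notin_in //.
  by apply/card_gt0P; exists set0.
rewrite natrM ler_pdivlMr ?mulr_gt0 ?ltr0n // mulrA mulVf // mul1r ler_nat.
apply: subset_leq_card; apply/subsetP => S; rewrite inE => /andP[xS yS].
exact: union_of_blocks_spreading.
Qed.

Lemma random_zero_set_of_padded_bundle a : padded_bundle d a ->
  forall D, 0 < D -> random_zero_set d D a (1 / 8).
Proof.
move=> pb D D_gt0; have [nu [nu_distr [nu_part nu_pad]]] := pb D D_gt0.
have nu_ge0 := nu_distr.1.
pose mu := push_distr (prod_distr nu (uniform_distr R {set {set T}}))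
  (fun PS => union_of_blocks PS.1 PS.2).
exists mu; split.
  apply/is_distr_push/is_distr_prod/is_distr_uniform => //.
  by apply/card_gt0P; exists set0.
move=> x y Dxy; rewrite push_distr_sum prod_distr_sum /=.
pose padded P := cball d x (D / a) \subset pblock P x.
apply: le_trans (_ : \sum_(P | padded P) nu P / 4 <= _).
  by rewrite -mulr_suml; have := nu_pad x; lra.
rewrite [leRHS](bigID padded) /=; apply: ler_wpDr.
  by apply: sumr_ge0 => P _; rewrite mulr_ge0 // sumr_ge0 // => S _; rewrite ffunE invr_ge0.
apply: ler_sum => P padP; have [->|nuP] := eqVneq (nu P) 0; first by rewrite !mul0r.
have nuP_gt0 : 0 < nu P by rewrite lt0r nuP nu_ge0.
have [partP diamP] := nu_part P nuP_gt0.
have /and3P[_ tiP _] := partP.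
apply: ler_wpM2l; first exact: nu_ge0.
exact: separating_blocks_prob tiP (pblock_neq_of_diam_lt partP diamP Dxy) padP.
Qed.

End PaddedDecompositionToZeroSet.

Theorem fact3p4 (R : realType) (T : finType) (d : T -> T -> R) :
  is_metric d -> (zeta d (1 / 8) <= alpha d)%E.
Proof.
move=> _; apply: ereal_inf_le_tmp => _ [a [a_gt0 pb] <-]; exists a => //.
by split=> //; exact: random_zero_set_of_padded_bundle.
Qed.
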